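(* Let $m\in\mathbb{N}$, let $(y_k)_{k=1}^m$ be a $1$-unconditional basic sequence and let $\varepsilon>0$. Then there exist $n\in\mathbb{N}$ and a block basis $(x_k)_{k=1}^m$ of the basis $(e_{i,j})_{i,j=1}^n$ of $B(\ell_\infty^n)$ (ordered lexicographically) such that $(x_k)_{k=1}^m$ is $(1+\varepsilon)$-equivalent to $(y_k)_{k=1}^m$, i.e. $(1+\varepsilon)^{-1}\|\sum_k b_ky_k\|\le\|\sum_k b_kx_k\|\le(1+\varepsilon)\|\sum_k b_ky_k\|$ for all scalars $(b_k)$.
   Context: $B(\ell_\infty^n)$ is the $n^2$-dimensional Banach space of linear operators on $\ell_\infty^n$ with the operator norm. With $(f_k)_{k=1}^n$ the unit vector basis of $\ell_\infty^n$, $e_{i,j}$ is the operator with $e_{i,j}(f_k)=f_j$ if $k=i$ and $e_{i,j}(f_k)=0$ otherwise. Then $\|\sum_{i,j=1}^n a_{i,j}e_{i,j}\|=\max_{j\le n}\sum_{i=1}^n|a_{i,j}|$, so $(e_{i,j})$ is a $1$-unconditional basis, ordered lexicographically as $e_{11},e_{12},\dots,e_{1n},e_{21},\dots,e_{nn}$. *)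

From HB Require Import structures.
From mathcomp Require Import all_boot all_order all_algebra.
From mathcomp Require Import all_classical all_reals all_analysis.
Set Implicit Arguments. Unset Strict Implicit. Unset Printing Implicit Defensive.
Import Order.TTheory GRing.Theory Num.Theory.
Import numFieldNormedType.Exports.
Local Open Scope ring_scope.

(* An element of B(l_infty^n) is given by its coefficients A i j w.r.t. the
   basis (e_{i,j}); its norm is max_j sum_i |a_{i,j}|. *)
Definition Bnorm (R : realType) (n : nat) (A : 'M[R]_n) : R :=
  \big[Num.max/0]_(j < n) \sum_(i < n) `|A i j|.

Definition lexpos (n : nat) (i j : 'I_n) : nat := (i * n + j)%N.

Definition is_block_basis (R : realType) (n m : nat) (x : 'I_m -> 'M[R]_n) : Prop :=
  (forall k, x k != 0) /\
  (forall (k l : 'I_m) (i j i' j' : 'I_n), (k < l)%N ->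
     x k i j != 0 -> x l i' j' != 0 -> (lexpos i j < lexpos i' j')%N).

Definition is_basic_seq (R : realType) (V : normedModType R) (m : nat)
  (y : 'I_m -> V) : Prop :=
  forall b : 'I_m -> R, \sum_(k < m) b k *: y k = 0 -> forall k, b k = 0.

Definition one_unconditional (R : realType) (V : normedModType R) (m : nat)
  (y : 'I_m -> V) : Prop :=
  forall (b : 'I_m -> R) (s : 'I_m -> bool),
    `| \sum_(k < m) ((-1) ^+ s k * b k) *: y k | = `| \sum_(k < m) b k *: y k |.

(* The norm N(b) = |sum_k b_k y_k| of a 1-unconditional sequence depends only on
   (|b_k|)_k, and Hahn-Banach shows it is normed, at each point, by a functional
   a >= 0 with sum_k a_k |b_k| <= N(b) for all b.  Because norming is
   homogeneous, the functionals norming the finitely many points of a grid of mesh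
   1/K (scaled by the |y_k|) give N(b) up to the factor 1 - m/K.  Placing x_k in
   row k of an n x n matrix with entries a^j_k in column j makes (x_k) a block basis
   with norm of sum_k b_k x_k equal to max_j sum_k a^j_k |b_k|. *)

From HB Require Import structures.
From mathcomp Require Import all_boot all_order all_algebra.
From mathcomp Require Import all_classical all_reals all_analysis.
From mathcomp Require Import ring lra zify.
Import Order.TTheory GRing.Theory Num.Theory.
Import numFieldNormedType.Exports.
Set Implicit Arguments. Unset Strict Implicit. Unset Printing Implicit Defensive.
Local Open Scope ring_scope.
Local Open Scope classical_set_scope.

Section FlattenAlong.
Variables (R : realType) (V : lmodType R).

Definition sublinear (q : V -> R) :=
  (forall x y, q (x + y) <= q x + q y) /\
  (forall t x, 0 <= t -> q (t *: x) = t * q x).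

Definition additive_along (q : V -> R) (w : V) :=
  forall x s, q (x + s *: w) = q x + s * q w.

(* The one-step extension of the Hahn-Banach proof: iterated along a basis, it
   turns a sublinear q into a linear minorant of q. *)
Definition flatten_along (q : V -> R) (v x : V) : R :=
  inf [set q (x + t *: v) - t * q v | t in [set t | 0 <= t]].

Lemma additive_along_of_shift_le (F : V -> R) w c : F 0 = 0 ->
  (forall x s, F (x + s *: w) <= F x + s * c) -> additive_along F w.
Proof.
move=> F0 le_shift.
have eq_shift x s : F (x + s *: w) = F x + s * c.
  apply/eqP; rewrite eq_le le_shift /=.
  by have := le_shift (x + s *: w) (- s); rewrite scaleNr addrK; lra.
have Fw : F w = c.
  by rewrite -[w]add0r -[w in _ + w]scale1r eq_shift F0 add0r mul1r.
by move=> x s; rewrite eq_shift Fw.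
Qed.

Variables (q : V -> R) (v : V).
Hypothesis q_sublinear : sublinear q.

Lemma sublinear0 : q 0 = 0.
Proof. by case: q_sublinear => _ qZ; rewrite -(scale0r (0 : V)) qZ // mul0r. Qed.

Lemma flatten_along_le x t : 0 <= t ->
  flatten_along q v x <= q (x + t *: v) - t * q v.
Proof.
have [qD qZ] := q_sublinear; move=> t_ge0; apply: ge_inf; last by exists t.
exists (- q (- x)) => _ [s s_ge0 <-].
have := qD (x + s *: v) (- x); rewrite addrC addKr -qZ //; lra.
Qed.

Lemma flatten_along_ge x z : (forall t, 0 <= t -> z <= q (x + t *: v) - t * q v) ->
  z <= flatten_along q v x.
Proof.
move=> z_le; apply: lb_le_inf; first by exists (q (x + 0 *: v) - 0 * q v), 0 => /=.
by move=> _ [t t_ge0 <-]; exact: z_le.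
Qed.

Lemma flatten_along_le_self x : flatten_along q v x <= q x.
Proof. by have := flatten_along_le x (lexx 0); rewrite scale0r addr0 mul0r subr0. Qed.

Lemma flatten_along0 : flatten_along q v 0 = 0.
Proof.
apply/eqP; rewrite eq_le (le_trans (flatten_along_le_self 0)) ?sublinear0 //=.
apply: flatten_along_ge => t t_ge0.
by case: q_sublinear => _ qZ; rewrite add0r qZ // subrr.
Qed.

Lemma sublinear_flatten_along : sublinear (flatten_along q v).
Proof.
have [qD qZ] := q_sublinear; split=> [x y|t x].
  suff : flatten_along q v (x + y) - flatten_along q v x <= flatten_along q v y by lra.
  apply: flatten_along_ge => s s_ge0.
  suff : flatten_along q v (x + y) - (q (y + s *: v) - s * q v) <= flatten_along q v x.
    by lra.
  apply: flatten_along_ge => t t_ge0.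
  have := flatten_along_le (x + y) (addr_ge0 t_ge0 s_ge0).
  rewrite scalerDl addrACA.
  have := qD (x + t *: v) (y + s *: v); lra.
rewrite le_eqVlt => /predU1P[<-|t_gt0]; first by rewrite scale0r mul0r flatten_along0.
have t_neq0 : t != 0 by rewrite gt_eqF.
apply/eqP; rewrite eq_le; apply/andP; split.
  rewrite -ler_pdivrMl //; apply: flatten_along_ge => s s_ge0.
  rewrite ler_pdivrMl //.
  have := flatten_along_le (t *: x) (mulr_ge0 (ltW t_gt0) s_ge0).
  by rewrite -scalerA -scalerDr qZ ?(ltW t_gt0) // -mulrA -mulrBr.
apply: flatten_along_ge => s s_ge0.
have := ler_wpM2l (ltW t_gt0) (flatten_along_le x (divr_ge0 s_ge0 (ltW t_gt0))).
have ts : t * (s / t) = s by rewrite mulrCA divff // mulr1.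
by rewrite mulrBr -[t * q (x + _)]qZ ?(ltW t_gt0) // scalerDr scalerA ts mulrA ts.
Qed.

Lemma flatten_along_additive_self : additive_along (flatten_along q v) v.
Proof.
apply: (additive_along_of_shift_le (c := q v)) flatten_along0 _ => x s.
suff : flatten_along q v (x + s *: v) - s * q v <= flatten_along q v x by lra.
apply: flatten_along_ge => t t_ge0.
pose u := Num.max 0 (t - s).
have u_ge0 : 0 <= u by rewrite le_max lexx.
have := flatten_along_le (x + s *: v) u_ge0; rewrite -addrA -scalerDl.
have [qD qZ] := q_sublinear.
have := qD (x + t *: v) ((s + u - t) *: v); rewrite qZ; last first.
  by rewrite subr_ge0 -lerBlDl le_max lexx orbT.
rewrite -addrA -scalerDl addrCA subrr addr0; lra.
Qed.

Lemma flatten_along_additive w :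
  additive_along q w -> additive_along (flatten_along q v) w.
Proof.
move=> q_add; apply: (additive_along_of_shift_le (c := q w)) flatten_along0 _ => x s.
suff : flatten_along q v (x + s *: w) - s * q w <= flatten_along q v x by lra.
apply: flatten_along_ge => t t_ge0.
have := flatten_along_le (x + s *: w) t_ge0.
by rewrite addrAC q_add; lra.
Qed.

Lemma flatten_along_self : flatten_along q v v = q v.
Proof.
apply/eqP; rewrite eq_le flatten_along_le_self /=.
apply: flatten_along_ge => t t_ge0.
case: q_sublinear => _ qZ.
have -> : v + t *: v = (1 + t) *: v by rewrite scalerDl scale1r.
by rewrite qZ ?addr_ge0 // mulrDl mul1r addrK.
Qed.

Lemma flatten_along_id w : additive_along q w -> flatten_along q v w = q w.
Proof.
move=> q_add; apply/eqP; rewrite eq_le flatten_along_le_self /=.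
apply: flatten_along_ge => t t_ge0.
have -> : w + t *: v = t *: v + 1 *: w by rewrite scale1r addrC.
by case: q_sublinear => _ qZ; rewrite q_add qZ // mul1r addrAC subrr add0r.
Qed.

End FlattenAlong.

Section RowHahnBanach.
Variable R : realType.

Definition flatten_along_seq (V : lmodType R) (q : V -> R) (l : seq V) : V -> R :=
  foldr (fun v F => flatten_along F v) q l.

Lemma flatten_along_seqP (V : lmodType R) (q : V -> R) l : sublinear q ->
  let Q := flatten_along_seq q l in
  [/\ sublinear Q, forall x, Q x <= q x,
      forall w, w \in l \/ additive_along q w -> additive_along Q w &
      forall w, additive_along q w -> Q w = q w].
Proof.
move=> q_sub; elim: l => [|v l [Q_sub Q_le Q_add Q_id]] /=.
  by split=> // w [].
split; first exact: sublinear_flatten_along.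
- by move=> x; exact: le_trans (flatten_along_le_self _ Q_sub _) (Q_le x).
- move=> w; rewrite inE => -[/predU1P[->|w_l]|q_add].
  + exact: flatten_along_additive_self.
  + by apply: flatten_along_additive => //; apply: Q_add; left.
  + by apply: flatten_along_additive => //; apply: Q_add; right.
- move=> w q_add; rewrite flatten_along_id //; first exact: Q_id.
  by apply: Q_add; right.
Qed.

Lemma additive_along_rowE m (Q : 'rV[R]_m -> R) : Q 0 = 0 ->
  (forall k, additive_along Q 'e_k) -> forall x, Q x = \sum_(k < m) x 0 k * Q 'e_k.
Proof.
move=> Q0 Q_add x; rewrite {1}(row_sum_delta x).
elim: (index_enum _) => [|k s IH]; first by rewrite !big_nil.
by rewrite !big_cons addrC Q_add IH addrC.
Qed.

Lemma row_hahn_banach m (p : 'rV[R]_m -> R) (c : 'rV[R]_m) : sublinear p ->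
  exists f : 'I_m -> R,
    (forall x : 'rV[R]_m, \sum_(k < m) x 0 k * f k <= p x) /\
    \sum_(k < m) c 0 k * f k = p c.
Proof.
move=> p_sub; have pc_sub := sublinear_flatten_along c p_sub.
have [Q_sub Q_le Q_add Q_id] :=
  flatten_along_seqP [seq 'e_k | k <- enum 'I_m] pc_sub.
set Q := flatten_along_seq _ _ in Q_sub Q_le Q_add Q_id.
have QE := additive_along_rowE (sublinear0 Q_sub)
  (fun k => Q_add _ (or_introl (map_f _ (mem_enum _ k)))).
exists (fun k => Q 'e_k); split=> [x|].
  by rewrite -QE (le_trans (Q_le x)) ?flatten_along_le_self.
rewrite -QE Q_id ?flatten_along_self //.
exact: flatten_along_additive_self.
Qed.

End RowHahnBanach.

Lemma basic_seq_neq0 (R : realType) (V : normedModType R) m (y : 'I_m -> V) k :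
  is_basic_seq y -> y k != 0.
Proof.
move=> y_basic; apply/eqP => yk0.
suff : (k == k)%:R = 0 :> R by rewrite eqxx => /eqP; rewrite oner_eq0.
apply: (y_basic (fun l => (l == k)%:R)).
by rewrite (bigD1 k) //= big1 ?yk0 ?scaler0 ?addr0 // => l /negPf ->; rewrite scale0r.
Qed.

Section UnconditionalNorm.
Variables (R : realType) (V : normedModType R) (m : nat) (y : 'I_m -> V).

Definition lincomb_norm (b : 'I_m -> R) : R := `| \sum_(k < m) b k *: y k |.

Lemma lincomb_normZ t b : lincomb_norm (fun k => t * b k) = `|t| * lincomb_norm b.
Proof.
rewrite /lincomb_norm -normrZ scaler_sumr; congr `|_|.
by apply: eq_bigr => k _; rewrite scalerA.
Qed.

Lemma lincomb_norm_le b c :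
  lincomb_norm b <= lincomb_norm c + \sum_(k < m) `|y k| * `|b k - c k|.
Proof.
rewrite /lincomb_norm.
have -> : \sum_(k < m) b k *: y k =
    \sum_(k < m) c k *: y k + \sum_(k < m) (b k - c k) *: y k.
  by rewrite -big_split /=; apply: eq_bigr => k _; rewrite -scalerDl addrC subrK.
apply: le_trans (ler_normD _ _) _; rewrite lerD2l.
apply: le_trans (ler_norm_sum _ _ _) _; apply: ler_sum => k _.
by rewrite normrZ mulrC.
Qed.

Lemma sublinear_lincomb_norm : sublinear (fun x : 'rV[R]_m => lincomb_norm (x 0)).
Proof.
split=> [x x'|t x t_ge0].
  rewrite /lincomb_norm; under eq_bigr => k _ do rewrite mxE scalerDl.
  by rewrite big_split; exact: ler_normD.
rewrite -[t in RHS]ger0_norm // -lincomb_normZ.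
by congr lincomb_norm; apply: funext => k; rewrite mxE.
Qed.

Hypothesis y_unc : one_unconditional y.

Lemma lincomb_norm_abs b : lincomb_norm (fun k => `|b k|) = lincomb_norm b.
Proof.
rewrite /lincomb_norm -(y_unc b (fun k => b k < 0)); congr `|_|.
apply: eq_bigr => k _; case: ltP => [b_lt0|b_ge0].
  by rewrite expr1 mulN1r ltr0_norm.
by rewrite expr0 mul1r ger0_norm.
Qed.

Lemma coord_le_lincomb_norm b j : `|b j| * `|y j| <= lincomb_norm b.
Proof.
have sum_flip : \sum_(k < m) ((-1) ^+ (k != j) * b k) *: y k + \sum_(k < m) b k *: y k
    = (b j + b j) *: y j.
  rewrite -big_split /= (bigD1 j) //= big1 ?addr0 => [|k /negPf kj].
    by rewrite eqxx expr0 mul1r scalerDl.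
  by rewrite kj expr1 mulN1r -scalerDl addNr scale0r.
have := ler_normD (\sum_(k < m) ((-1) ^+ (k != j) * b k) *: y k)
                  (\sum_(k < m) b k *: y k).
rewrite sum_flip y_unc normrZ -mulr2n -mulr_natr normrM (ger0_norm (ler0n _ 2)).
rewrite -/(lincomb_norm b); lra.
Qed.

Definition minorant (a : 'I_m -> R) :=
  (forall k, 0 <= a k) /\ forall b, \sum_(k < m) a k * `|b k| <= lincomb_norm b.

Definition norms (a c : 'I_m -> R) := lincomb_norm c <= \sum_(k < m) a k * `|c k|.

Lemma unit_minorant l : minorant (fun k => (l == k)%:R * `|y k|).
Proof.
split=> [k|b]; first by rewrite mulr_ge0.
rewrite (bigD1 l) //= big1 ?addr0 => [|k /negPf lk]; last by rewrite eq_sym lk !mul0r.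
by rewrite eqxx mul1r mulrC coord_le_lincomb_norm.
Qed.

Lemma exists_norming_minorant c : exists a, minorant a /\ norms a c.
Proof.
have [f [f_le f_c]] := row_hahn_banach (\row_k `|c k|) sublinear_lincomb_norm.
exists (fun k => `|f k|); split; first split=> [k|b]; first exact: normr_ge0.
  pose s k := f k * b k < 0.
  have := f_le (\row_k ((-1) ^+ s k * b k)).
  have -> : (\row_k ((-1) ^+ s k * b k)) 0 = (fun k => (-1) ^+ s k * b k).
    by apply: funext => k; rewrite mxE.
  have -> : \sum_(k < m) (-1) ^+ s k * b k * f k = \sum_(k < m) `|f k| * `|b k|.
    apply: eq_bigr => k _; rewrite -normrM mulrC /s; case: ltP => [fb_lt0|fb_ge0].
      by rewrite expr1 mulN1r mulrN ltr0_norm.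
    by rewrite expr0 mul1r ger0_norm.
  by rewrite {1}/lincomb_norm y_unc.
rewrite /norms -lincomb_norm_abs.
have -> : (fun k => `|c k|) = (\row_k `|c k|) 0 by apply: funext => k; rewrite mxE.
rewrite -f_c; apply: ler_sum => k _.
by rewrite mxE mulrC ler_wpM2r ?ler_norm.
Qed.

End UnconditionalNorm.

Section GridMinorants.
Variables (R : realType) (V : normedModType R) (m : nat) (y : 'I_m -> V).
Hypotheses (y_unc : one_unconditional y) (y_neq0 : forall k, y k != 0).

Lemma norms_scale a c t : 0 <= t -> norms y a c -> norms y a (fun k => t * c k).
Proof.
move=> t_ge0 a_c; rewrite /norms lincomb_normZ ger0_norm //.
under eq_bigr => k _ do rewrite normrM (ger0_norm t_ge0) mulrCA.
by rewrite -mulr_sumr ler_wpM2l.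
Qed.

Lemma minorant_norms_near a b c : minorant y a -> norms y a c ->
  (forall k, 0 <= c k <= `|b k|) ->
  lincomb_norm y b - \sum_(k < m) `|y k| * (`|b k| - c k) <= \sum_(k < m) a k * `|b k|.
Proof.
move=> [a_ge0 _] a_c c_bound.
have ac_le : \sum_(k < m) a k * `|c k| <= \sum_(k < m) a k * `|b k|.
  apply: ler_sum => k _; have /andP[c_ge0 c_le] := c_bound k.
  by rewrite ler_wpM2l // ger0_norm.
have abs_diff : \sum_(k < m) `|y k| * `| `|b k| - c k| =
    \sum_(k < m) `|y k| * (`|b k| - c k).
  by apply: eq_bigr => k _; rewrite ger0_norm // subr_ge0; case/andP: (c_bound k).
have := lincomb_norm_le y (fun k => `|b k|) c; rewrite lincomb_norm_abs // abs_diff.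
move: a_c; rewrite /norms; lra.
Qed.

(* Chosen so that, for N(b) > 0, N(b) * grid_point g approximates |b| from below
   with error at most N(b) / (K |y_k|) in coordinate k. *)
Definition grid_point K (g : {ffun 'I_m -> 'I_K.+1}) (k : 'I_m) : R :=
  (g k)%:R / (K%:R * `|y k|).

Lemma grid_point_near K b : (0 < K)%N -> 0 < lincomb_norm y b ->
  exists g : {ffun 'I_m -> 'I_K.+1}, forall k,
    let c := lincomb_norm y b * grid_point g k in
    0 <= c <= `|b k| /\ `|y k| * (`|b k| - c) <= lincomb_norm y b / K%:R.
Proof.
move=> K_gt0 Nb_gt0; set N := lincomb_norm y b.
have K_neq0 : K%:R != 0 :> R by rewrite pnatr_eq0 -lt0n.
have h_gt0 : 0 < N / K%:R by rewrite divr_gt0 ?ltr0n.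
pose u k := `|b k| * `|y k| / (N / K%:R).
have u_ge0 k : 0 <= u k by rewrite /u divr_ge0 ?mulr_ge0 // ltW.
have u_le k : u k <= K%:R.
  by rewrite /u ler_pdivrMr // mulrCA divff ?mulr1 ?coord_le_lincomb_norm.
exists [ffun k => inord (Num.truncn (u k))] => k c.
have trunc_lt : (Num.truncn (u k) < K.+1)%N.
  by rewrite ltnS truncn_le_nat (le_lt_trans (u_le k)) // ltr_nat.
have yk_gt0 : 0 < `|y k| by rewrite normr_gt0.
have c_eq : c = N / K%:R * (Num.truncn (u k))%:R / `|y k|.
  rewrite /c /grid_point ffunE inordK //; field.
  by rewrite gt_eqF ?K_neq0.
have b_eq : `|b k| = N / K%:R * u k / `|y k|.
  by rewrite /u; field; rewrite gt_eqF ?K_neq0 ?(gt_eqF Nb_gt0).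
have [tr_le tr_gt] := andP (truncn_itv (u_ge0 k)).
move: tr_le tr_gt; rewrite c_eq b_eq -natr1.
set t := (Num.truncn _)%:R => tr_le tr_gt.
have t_ge0 : 0 <= t := ler0n _ _.
have -> : `|y k| * (N / K%:R * u k / `|y k| - N / K%:R * t / `|y k|) =
    N / K%:R * (u k - t).
  by field; rewrite K_neq0 gt_eqF.
split; last by rewrite ler_piMr ?(ltW h_gt0) //; lra.
rewrite divr_ge0 ?mulr_ge0 ?(ltW Nb_gt0) //=.
by rewrite ler_pM2r ?invr_gt0 // ler_pM2l.
Qed.

Lemma grid_minorants_lower K (a : {ffun 'I_m -> 'I_K.+1} -> 'I_m -> R) :
  (0 < K)%N -> (forall g, minorant y (a g) /\ norms y (a g) (grid_point g)) ->
  forall b, exists g,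
    (1 - m%:R / K%:R) * lincomb_norm y b <= \sum_(k < m) a g k * `|b k|.
Proof.
move=> K_gt0 a_norming b.
have [Nb_gt0|Nb_le0] := ltP 0 (lincomb_norm y b); last first.
  exists [ffun => ord0]; have [[a_ge0 _] _] := a_norming [ffun => ord0].
  have -> : lincomb_norm y b = 0 by apply/eqP; rewrite eq_le Nb_le0 normr_ge0.
  by rewrite mulr0 sumr_ge0 // => k _; rewrite mulr_ge0.
have [g g_near] := grid_point_near K_gt0 Nb_gt0.
exists g; have [a_min a_c] := a_norming g.
have := minorant_norms_near a_min (norms_scale (ltW Nb_gt0) a_c)
  (fun k => (g_near k).1).
apply: le_trans; rewrite mulrBl mul1r lerD2l lerN2.
apply: le_trans (ler_sum _ (fun k _ => (g_near k).2)) _.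
by rewrite sumr_const card_ord -mulrA mulr_natl [_^-1 * _]mulrC.
Qed.

End GridMinorants.

Section RowEmbedding.
Variables (R : realType) (m J : nat) (w : 'I_(m + J) -> 'I_m -> R).

Definition row_embed (k : 'I_m) : 'M[R]_(m + J) :=
  \matrix_(i, j) if i == lshift J k then w j k else 0.

Lemma row_embed_block_basis :
  (forall k, exists j, w j k != 0) -> is_block_basis row_embed.
Proof.
move=> w_neq0; split=> [k|k l i j i' j' kl].
  have [j wjk] := w_neq0 k; apply/eqP => /matrixP/(_ (lshift J k) j).
  by rewrite !mxE eqxx; apply/eqP.
rewrite !mxE; case: (i =P lshift J k) => [-> _|_]; last by rewrite eqxx.
case: (i' =P lshift J l) => [-> _|_]; last by rewrite eqxx.
by rewrite /lexpos /=; have := ltn_ord j; have := ltn_ord j'; nia.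
Qed.

Lemma Bnorm_row_embed (b : 'I_m -> R) : (forall j k, 0 <= w j k) ->
  Bnorm (\sum_(k < m) b k *: row_embed k) =
  \big[Num.max/0]_(j < m + J) \sum_(k < m) w j k * `|b k|.
Proof.
move=> w_ge0; apply: eq_bigr => j _.
rewrite big_split_ord /= [X in _ + X]big1 ?addr0 => [|i _]; last first.
  by rewrite summxE big1 ?normr0 // => k _; rewrite !mxE eq_rlshift mulr0.
apply: eq_bigr => i _.
rewrite summxE (bigD1 i) //= !mxE eqxx big1 ?addr0 => [|k ki]; last first.
  by rewrite !mxE eq_lshift eq_sym (negPf ki) mulr0.
by rewrite normrM (ger0_norm (w_ge0 _ _)) mulrC.
Qed.

End RowEmbedding.

Lemma exists_nat_inv1D_le_1Bdiv (R : realType) (eps : R) (m : nat) : 0 < eps ->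
  exists K : nat, (0 < K)%N /\ (1 + eps)^-1 <= 1 - m%:R / K%:R.
Proof.
move=> eps_gt0; exists (Num.truncn (m%:R * (1 + eps) / eps)).+1; split=> //.
set K := _.+1; have := truncnS_gt (m%:R * (1 + eps) / eps); rewrite -/K.
have K_gt0 : 0 < K%:R :> R by rewrite ltr0n.
rewrite ltr_pdivrMr // => /ltW K_large.
have eps1_gt0 : 0 < 1 + eps by lra.
rewrite -subr_ge0.
have -> : 1 - m%:R / K%:R - (1 + eps)^-1 =
    (K%:R * eps - m%:R * (1 + eps)) / (K%:R * (1 + eps)).
  by field; rewrite !gt_eqF.
by rewrite divr_ge0 ?subr_ge0 // mulr_ge0 ?ltW.
Qed.

Theorem proposition2p2 (R : realType) (V : normedModType R) (m : nat)
  (y : 'I_m -> V) (eps : R) :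
  is_basic_seq y -> one_unconditional y -> 0 < eps ->
  exists (n : nat) (x : 'I_m -> 'M[R]_n),
    is_block_basis x /\
    forall b : 'I_m -> R,
      (1 + eps)^-1 * `| \sum_(k < m) b k *: y k |
        <= Bnorm (\sum_(k < m) b k *: x k) /\
      Bnorm (\sum_(k < m) b k *: x k) <= (1 + eps) * `| \sum_(k < m) b k *: y k |.
Proof.
move=> y_basic y_unc eps_gt0.
have y_neq0 k := basic_seq_neq0 k y_basic.
have [K [K_gt0 K_large]] := exists_nat_inv1D_le_1Bdiv m eps_gt0.
pose G := {ffun 'I_m -> 'I_K.+1}.
have /fin_all_exists[a a_norming] (g : G) :
    exists a, minorant y a /\ norms y a (grid_point y g).
  exact: exists_norming_minorant.
(* The first m columns only serve to make every x_k nonzero. *)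
pose w (j : 'I_(m + #|G|)) k := match fintype.split j with
  | inl l => (l == k)%:R * `|y k|
  | inr g => a (enum_val g) k end.
have w_minorant j : minorant y (w j).
  rewrite /w; case: fintype.split => [l|g]; first exact: unit_minorant.
  by case: (a_norming (enum_val g)).
exists (m + #|G|)%N, (row_embed w); split.
  apply: row_embed_block_basis => k; exists (lshift _ k).
  by rewrite /w (unsplitK (inl _ k)) eqxx mul1r normr_eq0.
move=> b; rewrite Bnorm_row_embed -/(lincomb_norm y b); last first.
  by move=> j k; case: (w_minorant j) => ->.
split.
  have [g g_le] := grid_minorants_lower y_unc y_neq0 K_gt0 a_norming b.
  apply: le_trans (le_bigmax _ _ (rshift m (enum_rank g))).
  rewrite /w (unsplitK (inr _ (enum_rank g))) enum_rankK.
  by apply: le_trans g_le; rewrite ler_wpM2r // normr_ge0.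
have eps1_ge1 : 1 <= 1 + eps by lra.
apply: bigmax_le => [|j _]; first by rewrite mulr_ge0 ?normr_ge0 // (le_trans ler01).
by apply: le_trans ((w_minorant j).2 b) _; rewrite ler_peMl ?normr_ge0.
Qed.
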